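(* Let $G=(V,E)$ be a directed graph, $s\neq t$ vertices, $u\in V$ and $l\ge 1$ an integer. Then there exists a (not necessarily simple) path from $s$ to $u$ of length at most $l$ not containing $t$ if and only if there exists a simple such path, and in that case $EV_l(s,u)=EV^*_l(s,u)$.
   Context: A path from $x$ to $y$ in $G$ is a vertex sequence $x=v_0,\dots,v_m=y$ with $(v_{i-1},v_i)\in E$ (vertices may repeat); its length is $m$ and $V(p)$ is its vertex set. A simple path has no repeated vertex. $EV_l(s,u)$ is the intersection of $V(p)$ over all paths $p$ (not necessarily simple) from $s$ to $u$ of length at most $l$ with $t\notin V(p)$, and it exists iff this family is nonempty. $EV^*_l(s,u)$ is the intersection of $V(p)$ over all simple paths $p$ from $s$ to $u$ of length at most $l$ with $t\notin V(p)$, and it exists iff this family is nonempty. *)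

From mathcomp Require Import all_boot.
Set Implicit Arguments. Unset Strict Implicit. Unset Printing Implicit Defensive.

(* A path from x to y is encoded by its sequence of successors p : seq T,
   the vertex sequence being x :: p; it is valid iff path e x p and
   last x p = y. Its length is size p and its vertex set V(p) is x :: p. *)

Definition is_walk (T : eqType) (e : rel T) (x y : T) (p : seq T) : Prop :=
  path e x p /\ last x p = y.

Definition adm_walk (T : eqType) (e : rel T) (t s u : T) (l : nat)
  (p : seq T) : Prop :=
  is_walk e s u p /\ size p <= l /\ t \notin (s :: p).

Definition adm_simple (T : eqType) (e : rel T) (t s u : T) (l : nat)
  (p : seq T) : Prop :=
  adm_walk e t s u l p /\ uniq (s :: p).

Definition EV (T : eqType) (e : rel T) (t s u : T) (l : nat) (v : T) : Prop :=
  forall p, adm_walk e t s u l p -> v \in s :: p.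

Definition EVstar (T : eqType) (e : rel T) (t s u : T) (l : nat) (v : T) : Prop :=
  forall p, adm_simple e t s u l p -> v \in s :: p.

From mathcomp Require Import all_boot.

(* Removing the loops of a walk (path.shortenP) yields a simple walk with the
   same endpoints whose vertices are among those of the original walk; hence
   it is no longer and still avoids t. *)

Section AdmissibleWalks.

Variables (T : eqType) (e : rel T).

Lemma walk_shorten {x y : T} {p : seq T} :
  is_walk e x y p ->
  exists q, [/\ is_walk e x y q, uniq (x :: q) & {subset x :: q <= x :: p}].
Proof.
move=> [e_p last_p]; case: (shortenP e_p) last_p => q e_q uniq_q sub_q last_q.
exists q; split=> // z; rewrite !inE => /orP[-> // | /sub_q ->].
by rewrite orbT.
Qed.

Variables (t s u : T) (l : nat).

Lemma adm_walk_shorten (p : seq T) :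
  adm_walk e t s u l p ->
  exists2 q, adm_simple e t s u l q & {subset s :: q <= s :: p}.
Proof.
move=> [walk_p [size_p t_p]].
have [q [walk_q uniq_q sub_q]] := walk_shorten walk_p.
exists q => //; split=> //; split=> //; split.
- by rewrite -ltnS; apply: leq_trans (uniq_leq_size uniq_q sub_q) _.
- by apply: contra t_p => /sub_q.
Qed.

Lemma adm_walk_simple_exists :
  (exists p, adm_walk e t s u l p) <-> (exists p, adm_simple e t s u l p).
Proof.
split=> [[p /adm_walk_shorten [q adm_q _]] | [p [adm_p _]]]; by exists q || exists p.
Qed.

Lemma EV_EVstar (v : T) : EV e t s u l v <-> EVstar e t s u l v.
Proof.
split=> [EVv p [adm_p _] | EVv p /adm_walk_shorten [q /EVv v_q sub_q]].
- exact: EVv.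
- exact: sub_q.
Qed.

End AdmissibleWalks.

Theorem theorem3p5 (T : finType) (e : rel T) (s t u : T) (l : nat) :
  s != t -> 1 <= l ->
  ((exists p, adm_walk e t s u l p) <-> (exists p, adm_simple e t s u l p)) /\
  ((exists p, adm_walk e t s u l p) ->
     forall v, EV e t s u l v <-> EVstar e t s u l v).
Proof.
move=> _ _; split; first exact: adm_walk_simple_exists.
by move=> _ v; apply: EV_EVstar.
Qed.
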